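(* Let $\mathcal H=(V,E)$ be a hypergraph with splitting functions and let $R\subseteq V$ satisfy $0<\mathrm{vol}(R)\le\mathrm{vol}(\bar R)$. Let $\varepsilon_0=\mathrm{vol}(R)/\mathrm{vol}(\bar R)$, let $\varepsilon\in[\varepsilon_0,\varepsilon_0+1)$, and set $\mu=\varepsilon-\varepsilon_0\ge0$. Let $S^*$ be a minimizer of $\mathrm{HLC}$ over all subsets of $V$; this is the set returned by Algorithm 1. Let $T\subseteq V$ satisfy $0<\mathrm{vol}(T)\le\mathrm{vol}(\bar T)$, and suppose that for some $\beta\in\left(\frac{2\mu}{1+2\mu},1\right)$, $$\frac{\mathrm{vol}(T\cap R)}{\mathrm{vol}(T)}\ge\frac{\mathrm{vol}(\bar T\cap R)}{\mathrm{vol}(\bar T)}+\beta.$$ Then $$\mathrm{ncut}(S^* )\le\frac{1}{\beta+2\mu\beta-2\mu}\,\mathrm{ncut}(T).$$ In particular, when $\varepsilon=\varepsilon_0$ we get $\mathrm{ncut}(S^* )\le\frac1\beta\mathrm{ncut}(T)$.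
   Context: A hypergraph $\mathcal H=(V,E)$ has a finite node set $V$, and each hyperedge $e\in E$ is a subset of $V$. Each hyperedge $e$ carries a splitting function $w_e:2^e\to\mathbb R_{\ge0}$ satisfying $w_e(A)=w_e(e\setminus A)$ for all $A\subseteq e$ and $w_e(\emptyset)=w_e(e)=0$. For $S\subseteq V$, $\mathrm{cut}_{\mathcal H}(S)=\sum_{e\in E}w_e(e\cap S)$. The degree of $v$ is $d_v=\sum_{e\ni v}w_e(\{v\})$, and $\mathrm{vol}(S)=\sum_{v\in S}d_v$. Write $\bar S=V\setminus S$. Hypergraph normalized cut is $\mathrm{ncut}(S)=\frac{\mathrm{cut}_{\mathcal H}(S)}{\mathrm{vol}(S)}+\frac{\mathrm{cut}_{\mathcal H}(\bar S)}{\mathrm{vol}(\bar S)}$. Define $\Omega_{R,\varepsilon}(S)=\mathrm{vol}(S\cap R)-\varepsilon\,\mathrm{vol}(S\cap\bar R)$. Set $\mathrm{HLC}(S)=\mathrm{cut}_{\mathcal H}(S)/\Omega_{R,\varepsilon}(S)$ if $\Omega_{R,\varepsilon}(S)>0$, and $\mathrm{HLC}(S)=\infty$ otherwise. *)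

From HB Require Import structures.
From mathcomp Require Import all_boot all_order all_algebra.
Set Implicit Arguments. Unset Strict Implicit. Unset Printing Implicit Defensive.
Import Order.TTheory GRing.Theory Num.Theory.
Local Open Scope ring_scope.

Section Hypergraph.
Variables (R : realFieldType) (V I : finType).
Variables (e : I -> {set V}) (w : I -> {set V} -> R).

Definition splitting_functions : Prop :=
  forall i : I,
    (forall A : {set V}, A \subset e i -> 0 <= w i A) /\
    (forall A : {set V}, A \subset e i -> w i A = w i (e i :\: A)) /\
    w i set0 = 0 /\ w i (e i) = 0.

Definition hcut (S : {set V}) : R := \sum_(i : I) w i (e i :&: S).

Definition deg (v : V) : R := \sum_(i : I | v \in e i) w i [set v].

Definition vol (S : {set V}) : R := \sum_(v in S) deg v.

Definition ncut (S : {set V}) : R :=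
  hcut S / vol S + hcut (~: S) / vol (~: S).

Definition Omega (Rs : {set V}) (eps : R) (S : {set V}) : R :=
  vol (S :&: Rs) - eps * vol (S :&: ~: Rs).

(* HLC with values in R ∪ {∞}: None stands for ∞ *)
Definition HLC (Rs : {set V}) (eps : R) (S : {set V}) : option R :=
  if 0 < Omega Rs eps S then Some (hcut S / Omega Rs eps S) else None.

Definition ext_le (a b : option R) : bool :=
  match a, b with
  | _, None => true
  | None, Some _ => false
  | Some x, Some y => x <= y
  end.

Definition is_HLC_minimizer (Rs : {set V}) (eps : R) (S : {set V}) : Prop :=
  forall S' : {set V}, ext_le (HLC Rs eps S) (HLC Rs eps S').

End Hypergraph.

From Pilot Require Import Defs.
From HB Require Import structures.
From mathcomp Require Import all_boot all_order all_algebra.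
From mathcomp Require Import ring lra.
Import Order.TTheory GRing.Theory Num.Theory.
Set Implicit Arguments. Unset Strict Implicit. Unset Printing Implicit Defensive.
Local Open Scope ring_scope.

(* Write N = vol V, r = vol R, rb = vol (~ R), and for a set S write s, sb for
   the volumes of S and ~ S and a, c for those of S ∩ R and ~ S ∩ R.  Since
   cut(S) = cut(~ S), ncut(S) = cut(S) N / (s sb).  At eps0 = r / rb the
   local objective satisfies the identity Omega_eps0(S) rb = a sb - c s, which
   is at most s sb; as Omega only decreases in eps, ncut(S) <= (N / rb) HLC(S)
   for every S.  Conversely the bias hypothesis on T reads a sb - c s >=
   beta s sb, and the extra penalty mu vol(T ∩ ~ R) rb is at most
   2 mu (1 - beta) s sb because vol(T ∩ ~ R) <= (1 - beta) vol T and
   rb <= N <= 2 vol(~ T); so (N / rb) HLC(T) <= ncut(T) / (beta + 2 mu beta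
   - 2 mu).  Minimality of S* links the two bounds. *)

Lemma ler_ratio_gap (F : realFieldType) (a c t u beta : F) :
  0 < t -> 0 < u -> c / u + beta <= a / t -> beta * t * u <= a * u - c * t.
Proof.
move=> t_gt0 u_gt0 gap; rewrite -subr_ge0.
have -> : a * u - c * t - beta * t * u = t * u * (a / t - (c / u + beta)).
  by field; rewrite !gt_eqF.
by rewrite mulr_ge0 ?subr_ge0 // ltW ?mulr_gt0.
Qed.

Lemma ler_wdiv2l (F : numFieldType) (x y z : F) :
  0 <= x -> 0 < y -> y <= z -> x / z <= x / y.
Proof.
move=> x_ge0 y_gt0 le_yz; apply: ler_wpM2l => //.
by rewrite lef_pV2 ?posrE // (lt_le_trans y_gt0).
Qed.

Section HypergraphCut.
Variables (R : realFieldType) (V I : finType).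
Variables (e : I -> {set V}) (w : I -> {set V} -> R).
Hypothesis sf : splitting_functions e w.

Local Notation vol := (vol e w).
Local Notation hcut := (hcut e w).
Local Notation Omega := (Omega e w).

Lemma deg_ge0 v : 0 <= deg e w v.
Proof.
apply: sumr_ge0 => i vi; have [w_ge0 _] := sf i.
by apply: w_ge0; rewrite sub1set.
Qed.

Lemma vol_ge0 S : 0 <= vol S.
Proof. by apply: sumr_ge0 => v _; apply: deg_ge0. Qed.

Lemma volID S A : vol S = vol (S :&: A) + vol (S :&: ~: A).
Proof. by rewrite /Defs.vol (big_setID A) setDE. Qed.

Lemma vol_setC S : vol S + vol (~: S) = vol [set: V].
Proof. by rewrite [RHS](volID _ S) !setTI. Qed.

Lemma hcut_ge0 S : 0 <= hcut S.
Proof. by apply: sumr_ge0 => i _; have [w_ge0 _] := sf i; apply/w_ge0/subsetIl. Qed.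

Lemma hcutC S : hcut (~: S) = hcut S.
Proof.
apply: eq_bigr => i _; have [_ [w_sym _]] := sf i.
rewrite (w_sym (e i :&: S)) ?subsetIl //; congr (w i _).
by rewrite setDIr setDv set0U setDE.
Qed.

Lemma ncutE S : vol S != 0 -> vol (~: S) != 0 ->
  ncut e w S = hcut S * vol [set: V] / (vol S * vol (~: S)).
Proof. by move=> S0 Sc0; rewrite /ncut hcutC -(vol_setC S); field; apply/andP. Qed.

Lemma Omega_antitone_eps Rs S {eps eps' : R} :
  eps' <= eps -> Omega Rs eps S <= Omega Rs eps' S.
Proof.
move=> le_eps; rewrite /Defs.Omega lerD2l lerN2.
by apply: ler_wpM2r => //; apply: vol_ge0.
Qed.

Variable Rs : {set V}.
Hypothesis volRc_gt0 : 0 < vol (~: Rs).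
Let eps0 := vol Rs / vol (~: Rs).

Lemma Omega_eps0_mul S :
  Omega Rs eps0 S * vol (~: Rs) =
    vol (S :&: Rs) * vol (~: S) - vol (~: S :&: Rs) * vol S.
Proof.
have eps0E : eps0 * vol (~: Rs) = vol Rs by rewrite /eps0 mulfVK ?gt_eqF.
have -> : Omega Rs eps0 S * vol (~: Rs) =
    vol (S :&: Rs) * vol (~: Rs) - vol (S :&: ~: Rs) * (eps0 * vol (~: Rs)).
  by rewrite /Defs.Omega; ring.
rewrite eps0E (volID Rs S) (volID (~: Rs) S) (volID S Rs) (volID (~: S) Rs).
by rewrite !(setIC Rs) !(setIC (~: Rs)); ring.
Qed.

Lemma Omega_mul_le_vol S {eps : R} : eps0 <= eps ->
  Omega Rs eps S * vol (~: Rs) <= vol S * vol (~: S).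
Proof.
move=> le_eps0.
apply: (le_trans (ler_wpM2r (ltW volRc_gt0) (Omega_antitone_eps Rs S le_eps0))).
rewrite Omega_eps0_mul.
have : vol (S :&: Rs) * vol (~: S) <= vol S * vol (~: S).
  by apply: ler_wpM2r; rewrite ?vol_ge0 // [leRHS](volID _ Rs) lerDl vol_ge0.
have : 0 <= vol (~: S :&: Rs) * vol S by rewrite mulr_ge0 ?vol_ge0.
lra.
Qed.

Lemma Omega_mul_ge_biased (mu beta : R) T :
  0 <= mu -> 0 < vol T -> vol T <= vol (~: T) ->
  beta * vol T * vol (~: T) <=
    vol (T :&: Rs) * vol (~: T) - vol (~: T :&: Rs) * vol T ->
  (beta + 2 * mu * beta - 2 * mu) * vol T * vol (~: T) <=
    Omega Rs (eps0 + mu) T * vol (~: Rs).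
Proof.
move=> mu_ge0 volT_gt0 volT_le bias.
have volTc_gt0 : 0 < vol (~: T) by apply: lt_le_trans volT_le.
have -> : Omega Rs (eps0 + mu) T * vol (~: Rs) =
    Omega Rs eps0 T * vol (~: Rs) - mu * (vol (T :&: ~: Rs) * vol (~: Rs)).
  by rewrite /Defs.Omega; ring.
have inT_ge : beta * vol T <= vol (T :&: Rs).
  rewrite -(ler_pM2r volTc_gt0).
  have : 0 <= vol (~: T :&: Rs) * vol T by rewrite mulr_ge0 ?vol_ge0.
  lra.
have outT_le : vol (T :&: ~: Rs) <= (1 - beta) * vol T.
  by move: inT_ge; rewrite [in vol T](volID T Rs); lra.
have volRc_le : vol (~: Rs) <= 2 * vol (~: T).
  have := vol_setC Rs; have := vol_setC T; have := vol_ge0 Rs; lra.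
have penalty : vol (T :&: ~: Rs) * vol (~: Rs) <=
    (1 - beta) * vol T * (2 * vol (~: T)).
  by rewrite ler_pM ?vol_ge0.
have := ler_wpM2l mu_ge0 penalty; rewrite Omega_eps0_mul; lra.
Qed.

Lemma ncut_le_HLC (eps : R) S : eps0 <= eps -> 0 < Omega Rs eps S ->
  ncut e w S <= vol [set: V] / vol (~: Rs) * (hcut S / Omega Rs eps S).
Proof.
move=> le_eps0 Omega_gt0.
have P_gt0 : 0 < Omega Rs eps S * vol (~: Rs) by rewrite mulr_gt0.
have P_le := Omega_mul_le_vol S le_eps0.
have /andP[volS_gt0 volSc_gt0] : (0 < vol S) && (0 < vol (~: S)).
  by rewrite -mulr_ge0_gt0 ?vol_ge0 //; apply: lt_le_trans P_le.
rewrite ncutE ?gt_eqF //.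
have -> : vol [set: V] / vol (~: Rs) * (hcut S / Omega Rs eps S) =
    hcut S * vol [set: V] / (Omega Rs eps S * vol (~: Rs)).
  by field; rewrite !gt_eqF.
by apply: ler_wdiv2l; rewrite ?mulr_ge0 ?hcut_ge0 ?vol_ge0.
Qed.

Lemma HLC_le_ncut (eps k : R) T : 0 < k -> 0 < vol T -> 0 < vol (~: T) ->
  k * vol T * vol (~: T) <= Omega Rs eps T * vol (~: Rs) ->
  vol [set: V] / vol (~: Rs) * (hcut T / Omega Rs eps T) <= k^-1 * ncut e w T.
Proof.
move=> k_gt0 volT_gt0 volTc_gt0 le_P.
have Q_gt0 : 0 < k * vol T * vol (~: T) by rewrite !mulr_gt0.
have Omega_gt0 : 0 < Omega Rs eps T.
  by rewrite -(pmulr_lgt0 _ volRc_gt0); apply: lt_le_trans le_P.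
rewrite ncutE ?gt_eqF //.
have -> : vol [set: V] / vol (~: Rs) * (hcut T / Omega Rs eps T) =
    hcut T * vol [set: V] / (Omega Rs eps T * vol (~: Rs)).
  by field; rewrite !gt_eqF.
have -> : k^-1 * (hcut T * vol [set: V] / (vol T * vol (~: T))) =
    hcut T * vol [set: V] / (k * vol T * vol (~: T)).
  by field; rewrite !gt_eqF.
by apply: ler_wdiv2l; rewrite ?mulr_ge0 ?hcut_ge0 ?vol_ge0 ?mulr_gt0.
Qed.

End HypergraphCut.

Theorem theorem5 (R : realFieldType) (V I : finType)
  (e : I -> {set V}) (w : I -> {set V} -> R)
  (Rs : {set V}) (eps beta : R) (Sstar T : {set V}) :
  splitting_functions e w ->
  0 < vol e w Rs -> vol e w Rs <= vol e w (~: Rs) ->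
  let eps0 := vol e w Rs / vol e w (~: Rs) in
  let mu := eps - eps0 in
  eps0 <= eps -> eps < eps0 + 1 ->
  is_HLC_minimizer e w Rs eps Sstar ->
  0 < vol e w T -> vol e w T <= vol e w (~: T) ->
  2 * mu / (1 + 2 * mu) < beta -> beta < 1 ->
  vol e w (T :&: Rs) / vol e w T >=
    vol e w (~: T :&: Rs) / vol e w (~: T) + beta ->
  ncut e w Sstar <= (beta + 2 * mu * beta - 2 * mu)^-1 * ncut e w T.
Proof.
move=> sf volR_gt0 volR_le eps0 mu le_eps0 _ Smin volT_gt0 volT_le beta_gt _ bias.
have volRc_gt0 := lt_le_trans volR_gt0 volR_le.
have volTc_gt0 := lt_le_trans volT_gt0 volT_le.
have mu_ge0 : 0 <= mu by rewrite subr_ge0.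
have k_gt0 : 0 < beta + 2 * mu * beta - 2 * mu.
  by move: beta_gt; rewrite ltr_pdivrMr; lra.
have bias_mul := ler_ratio_gap volT_gt0 volTc_gt0 bias.
have epsE : eps0 + mu = eps by rewrite /mu; ring.
have OmegaT := Omega_mul_ge_biased sf volRc_gt0 mu_ge0 volT_gt0 volT_le bias_mul.
rewrite epsE in OmegaT.
have OmegaT_gt0 : 0 < Omega e w Rs eps T.
  rewrite -(pmulr_lgt0 _ volRc_gt0); apply: lt_le_trans OmegaT.
  by rewrite !mulr_gt0.
have := Smin T; rewrite /HLC (ifT _ _ OmegaT_gt0).
case: ifP => //= OmegaS_gt0 HLC_le.
apply: le_trans (ncut_le_HLC sf volRc_gt0 le_eps0 OmegaS_gt0) _.
apply: le_trans (HLC_le_ncut sf volRc_gt0 k_gt0 volT_gt0 volTc_gt0 OmegaT).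
by rewrite ler_wpM2l // divr_ge0 ?vol_ge0 // ltW.
Qed.
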